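(* Let $n\ge1$ and $\gamma\in PSL(n+1,\mathbb{C})$ have a lift $\widetilde\gamma\in SL(n+1,\mathbb{C})$ which is diagonalizable and all of whose eigenvalues have modulus $1$. Then $\Lambda_{Kul}(\langle\gamma\rangle)=\emptyset$ if $\gamma$ has finite order, and $\Lambda_{Kul}(\langle\gamma\rangle)=\mathbb{P}^n_{\mathbb{C}}$ if $\gamma$ has infinite order.
   Context: For $\Gamma\subset PSL(n+1,\mathbb{C})$: a cluster point of $\Gamma z$ is a limit of $g_mz$ with pairwise distinct $g_m\in\Gamma$; $\Lambda(\Gamma)$ is the closure of the union of cluster points of $\Gamma z$ over all $z$; $L_2(\Gamma)$ is the closure of the union, over compact $K\subset\mathbb{P}^n_{\mathbb{C}}\setminus\Lambda(\Gamma)$, of cluster points of $\Gamma K$ (limits of $g_mk_m$, $g_m$ pairwise distinct, $k_m\in K$); $\Lambda_{Kul}(\Gamma)=\Lambda(\Gamma)\cup L_2(\Gamma)$. *)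

From HB Require Import structures.
From mathcomp Require Import all_boot all_order all_algebra.
From mathcomp Require Import complex.
From mathcomp Require Import reals.
Set Implicit Arguments. Unset Strict Implicit. Unset Printing Implicit Defensive.
Import Order.TTheory GRing.Theory Num.Theory.
Local Open Scope ring_scope.

Section Kulkarni.
Variables (R : realType) (n : nat).
Local Notation C := (R[i]).

(* Points of P^n_C are represented by nonzero column vectors of C^{n+1};
   all notions below are invariant under nonzero rescaling. *)
Definition pvec := 'cV[C]_(n.+1).

Definition vcvg (u : nat -> pvec) (v : pvec) : Prop :=
  forall e : C, 0 < e -> exists N : nat, forall m, (N <= m)%N ->
    forall i, `|u m i ord0 - v i ord0| < e.

(* Convergence in P^n_C (quotient topology): the sequence of points [x m]
   converges to [y] iff suitable representatives converge in C^{n+1}\{0}. *)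
Definition pcvg (x : nat -> pvec) (y : pvec) : Prop :=
  y != 0 /\ (forall m, x m != 0) /\
  exists c : nat -> C, (forall m, c m != 0) /\ vcvg (fun m => c m *: x m) y.

(* Closure in P^n_C (sequential closure; P^n_C is metrizable). *)
Definition pclosure (S : pvec -> Prop) : pvec -> Prop :=
  fun y => exists x : nat -> pvec, (forall m, S (x m)) /\ pcvg x y.

(* Compactness of the image of K\{0} in P^n_C (sequential compactness). *)
Definition pcompact (K : pvec -> Prop) : Prop :=
  forall x : nat -> pvec, (forall m, x m != 0 /\ K (x m)) ->
    exists phi : nat -> nat, (forall m, (phi m < phi m.+1)%N) /\
      exists y, K y /\ pcvg (fun m => x (phi m)) y.

(* Elements of PSL(n+1,C) = PGL(n+1,C) are represented by invertible
   matrices, identified up to a nonzero scalar. A subgroup Gamma is given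
   by a predicate on such representatives. *)
Definition mx_peq (A B : 'M[C]_(n.+1)) : Prop :=
  exists c : C, c != 0 /\ B = c *: A.

Definition pw_distinct (h : nat -> 'M[C]_(n.+1)) : Prop :=
  forall i j : nat, i <> j -> ~ mx_peq (h i) (h j).

Definition cluster_pt (Gamma : 'M[C]_(n.+1) -> Prop) (z y : pvec) : Prop :=
  exists h : nat -> 'M[C]_(n.+1),
    (forall m, Gamma (h m)) /\ pw_distinct h /\ pcvg (fun m => h m *m z) y.

Definition Lambda (Gamma : 'M[C]_(n.+1) -> Prop) : pvec -> Prop :=
  pclosure (fun y => exists z : pvec, z != 0 /\ cluster_pt Gamma z y).

Definition cluster_set (Gamma : 'M[C]_(n.+1) -> Prop) (K : pvec -> Prop)
    (y : pvec) : Prop :=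
  exists (h : nat -> 'M[C]_(n.+1)) (k : nat -> pvec),
    (forall m, Gamma (h m)) /\ pw_distinct h /\
    (forall m, k m != 0 /\ K (k m)) /\ pcvg (fun m => h m *m k m) y.

Definition L2 (Gamma : 'M[C]_(n.+1) -> Prop) : pvec -> Prop :=
  pclosure (fun y => exists K : pvec -> Prop,
    pcompact K /\ (forall k, k != 0 -> K k -> ~ Lambda Gamma k) /\
    cluster_set Gamma K y).

Definition Lambda_Kul (Gamma : 'M[C]_(n.+1) -> Prop) : pvec -> Prop :=
  fun y => Lambda Gamma y \/ L2 Gamma y.

Definition cyclic_grp (g : 'M[C]_(n.+1)) : 'M[C]_(n.+1) -> Prop :=
  fun h => exists k : int, mx_peq (g ^ k) h.

Definition psl_finite_order (g : 'M[C]_(n.+1)) : Prop :=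
  exists k : nat, (0 < k)%N /\ exists c : C, g ^+ k = c%:M.

End Kulkarni.

From HB Require Import structures.
From mathcomp Require Import all_boot all_order all_algebra.
From mathcomp Require Import complex.
From mathcomp Require Import reals.
From mathcomp Require Import ring lra.
From Stdlib Require Import IndefiniteDescription.
Import Order.TTheory GRing.Theory Num.Theory Normc.
Set Implicit Arguments.
Unset Strict Implicit.
Unset Printing Implicit Defensive.
Local Open Scope ring_scope.

(* If some power g^K is scalar, <g> is finite in PSL(n+1,C), so it contains no
   sequence of pairwise distinct elements and both Lambda and L_2 are empty.
   Otherwise g = P^-1 D P with D diagonal and unimodular. Dirichlet's
   simultaneous approximation gives arbitrarily large exponents d for which all
   eigenvalues^d, hence g^d, are close to 1; along such exponents, which are
   pairwise distinct modulo scalars since g has infinite order, every point is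
   a cluster point of its own orbit, so Lambda is the whole of P^n. *)

Section ComplexModulus.
Variable R : realType.
Local Notation C := R[i].
Implicit Types z w : C.

Lemma normc_ge0 z : 0 <= normc z.
Proof. by case: z => a b; exact: sqrtr_ge0. Qed.

Lemma normcX z k : normc (z ^+ k) = normc z ^+ k.
Proof. by elim: k => [|k IHk]; rewrite ?normc1 // !exprS normcM IHk. Qed.

Lemma normc_le_ReIm z : normc z <= `|complex.Re z| + `|complex.Im z|.
Proof.
case: z => a b /=.
have ab_ge0 : 0 <= `|a| * `|b| by rewrite mulr_ge0.
rewrite -[leRHS]ger0_norm ?addr_ge0 // -sqrtr_sqr ler_wsqrtr //.
by rewrite sqrrD -[a ^+ 2]real_normK ?num_real // -[b ^+ 2]real_normK ?num_real //; nra.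
Qed.

Lemma normc_eq1_ReIm z : normc z = 1 -> -1 <= complex.Re z <= 1 /\ -1 <= complex.Im z <= 1.
Proof.
case: z => a b /= z1.
have : a ^+ 2 + b ^+ 2 = 1.
  by rewrite -(sqr_sqrtr (addr_ge0 (sqr_ge0 a) (sqr_ge0 b))) z1 expr1n.
by split; apply/andP; split; nra.
Qed.

Lemma ReB z w : complex.Re (z - w) = complex.Re z - complex.Re w.
Proof. by case: z w => [a b] [c d]. Qed.

Lemma ImB z w : complex.Im (z - w) = complex.Im z - complex.Im w.
Proof. by case: z w => [a b] [c d]. Qed.

(* The order of [C] is partial: [0 < e] forces [e] to be real. *)
Lemma normc_ltC z e : 0 < e -> normc z < complex.Re e -> `|z| < e.
Proof.
by case: e => a b; rewrite ltcE /= => /andP[/eqP -> _] lt_za; rewrite ltcR.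
Qed.

End ComplexModulus.

Section Cells.
Variables (R : realType) (eta : R).
Hypothesis eta_gt0 : 0 < eta.

Definition cell (x : R) : nat := Num.truncn ((x + 1) / eta).

Definition ncells : nat := (Num.truncn (2 / eta)).+1.

Lemma cell_lt x : -1 <= x <= 1 -> (cell x < ncells)%N.
Proof.
case/andP=> x_ge x_le; rewrite /cell truncn_lt_nat; last first.
  by rewrite divr_ge0 ?(ltW eta_gt0) //; lra.
have [_ lt_trunc] := andP (truncn_itv (divr_ge0 (ler0n R 2) (ltW eta_gt0))).
by apply: le_lt_trans lt_trunc; rewrite ler_pM2r ?invr_gt0 //; lra.
Qed.

Lemma eq_cell_close x y : -1 <= x -> -1 <= y -> cell x = cell y -> `|x - y| < eta.
Proof.
move=> x_ge y_ge cell_xy.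
have scaled_ge0 u : -1 <= u -> 0 <= (u + 1) / eta.
  by move=> u_ge; rewrite divr_ge0 ?(ltW eta_gt0) //; lra.
have /andP[x1 x2] := truncn_itv (scaled_ge0 x x_ge).
have /andP[y1 y2] := truncn_itv (scaled_ge0 y y_ge).
move: x1 x2 y1 y2; rewrite -/(cell x) -/(cell y) cell_xy -natr1.
have -> : x - y = ((x + 1) / eta - (y + 1) / eta) * eta.
  by rewrite mulrBl !divfK ?gt_eqF //; ring.
rewrite normrM (gtr0_norm eta_gt0) gtr_pMl // ltr_norml.
set u := (x + 1) / eta; set v := (y + 1) / eta => *; apply/andP; split; lra.
Qed.

End Cells.

Section SimultaneousReturn.
Variable R : realType.
Local Notation C := R[i].

(* Dirichlet: pigeonhole on the cells of the real and imaginary parts of the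
   first [#|T|.+1] powers, [T] being the type of all cell patterns. *)
Lemma unimodular_simultaneous_return m (l : 'I_m -> C) :
    (forall i, normc (l i) = 1) -> forall del : R, 0 < del ->
  exists2 d, (0 < d)%N & forall i, normc (l i ^+ d - 1) < del.
Proof.
move=> l1 del del_gt0; pose eta := del / 2.
have eta_gt0 : 0 < eta by rewrite divr_gt0.
pose part (b : bool) (z : C) := if b then complex.Re z else complex.Im z.
have part_unit b i j : -1 <= part b (l i ^+ j) <= 1.
  have [] : -1 <= complex.Re (l i ^+ j) <= 1 /\ -1 <= complex.Im (l i ^+ j) <= 1.
    by apply: normc_eq1_ReIm; rewrite normcX l1 expr1n.
  by case: b.
pose T := {ffun 'I_m * bool -> 'I_(ncells eta)}.
pose pattern (j : 'I_#|T|.+1) : T :=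
  [ffun p => inord (cell eta (part p.2 (l p.1 ^+ j)))].
have /injectivePn[a [b neq_ab pattern_ab]] : ~~ injectiveb pattern.
  by apply/injectiveP => /leq_card; rewrite card_ord ltnn.
wlog lt_ab : a b neq_ab pattern_ab / (a < b)%N.
  move=> ab_sym; case: (ltngtP a b) => [|gt_ab|/val_inj eq_ab]; first exact: ab_sym.
    by apply: (ab_sym b a); rewrite // eq_sym.
  by rewrite eq_ab eqxx in neq_ab.
exists (b - a)%N => [|i]; first by rewrite subn_gt0.
have close c : `|part c (l i ^+ b) - part c (l i ^+ a)| < eta.
  have := congr1 (fun f : T => val (f (i, c))) pattern_ab.
  rewrite /= !ffunE /= !inordK ?cell_lt ?part_unit // => cell_ab.
  have [[ab1 _] [bb1 _]] := (andP (part_unit c i a), andP (part_unit c i b)).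
  exact: eq_cell_close.
have : normc (l i ^+ b - l i ^+ a) < del.
  apply: le_lt_trans (normc_le_ReIm _) _; rewrite ReB ImB.
  by have := close true; have := close false; rewrite /part /eta; lra.
have -> : l i ^+ b - l i ^+ a = l i ^+ a * (l i ^+ (b - a) - 1).
  by rewrite mulrBr mulr1 -exprD subnKC // ltnW.
by rewrite normcM normcX l1 expr1n mul1r.
Qed.

End SimultaneousReturn.

Lemma ler_term_sum (R : numDomainType) (I : finType) (F : I -> R) i :
  (forall j, 0 <= F j) -> F i <= \sum_j F j.
Proof. by move=> F_ge0; rewrite (bigD1 i) //= lerDl sumr_ge0. Qed.
Arguments ler_term_sum {R I} F i.

Section EntrywiseNorm.
Variable R : realType.
Local Notation C := R[i].

Definition mxnorm p q (A : 'M[C]_(p, q)) : R := \sum_i \sum_j normc (A i j).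

Lemma normc_sum (I : Type) (r : seq I) (P : pred I) (F : I -> C) :
  normc (\sum_(i <- r | P i) F i) <= \sum_(i <- r | P i) normc (F i).
Proof.
elim/big_rec2: _ => [|i x y _ le_xy]; first by rewrite normc0.
by apply: le_trans (le_normcD _ _) _; rewrite lerD2l.
Qed.

Lemma mxnorm_ge0 p q (A : 'M[C]_(p, q)) : 0 <= mxnorm A.
Proof. by do 2![apply: sumr_ge0 => ? _]; exact: normc_ge0. Qed.

Lemma rownorm_le_mxnorm p q (A : 'M[C]_(p, q)) i :
  \sum_j normc (A i j) <= mxnorm A.
Proof.
apply: (ler_term_sum (fun i => \sum_j normc (A i j))) => k.
by apply: sumr_ge0 => l _; exact: normc_ge0.
Qed.

Lemma normc_le_mxnorm p q (A : 'M[C]_(p, q)) i j : normc (A i j) <= mxnorm A.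
Proof.
apply: le_trans (rownorm_le_mxnorm A i).
exact: ler_term_sum (fun j => normc (A i j)) j (fun l => normc_ge0 _).
Qed.

Lemma mxnorm_gt0 p q (A : 'M[C]_(p, q)) : A != 0 -> 0 < mxnorm A.
Proof.
case/matrix0Pn => i [j] Aij_neq0; apply: lt_le_trans (normc_le_mxnorm A i j).
by rewrite lt_def normc_ge0 andbT; apply: contraNneq Aij_neq0 => /eq0_normc ->.
Qed.

Lemma mxnormM p q r (A : 'M[C]_(p, q)) (B : 'M[C]_(q, r)) :
  mxnorm (A *m B) <= mxnorm A * mxnorm B.
Proof.
apply: (@le_trans _ _ (\sum_i \sum_j \sum_k normc (A i k) * normc (B k j))).
  do 2![apply: ler_sum => ? _]; rewrite mxE; apply: le_trans (normc_sum _ _ _) _.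
  by apply: ler_sum => k _; rewrite normcM.
rewrite /mxnorm mulr_suml; apply: ler_sum => i _.
rewrite exchange_big /= mulr_suml; apply: ler_sum => k _.
rewrite -mulr_sumr; apply: ler_wpM2l; [exact: normc_ge0 | exact: rownorm_le_mxnorm].
Qed.

Lemma mxnorm_diag k (s : 'rV[C]_k) : mxnorm (diag_mx s) = \sum_i normc (s 0 i).
Proof.
apply: eq_bigr => i _; rewrite (bigD1 i) //= big1 => [|j neq_ji].
  by rewrite mxE eqxx mulr1n addr0.
by rewrite mxE eq_sym (negPf neq_ji) mulr0n normc0.
Qed.

End EntrywiseNorm.

Lemma diag_mxX (F : pzRingType) n (s : 'rV[F]_n) d :
  diag_mx s ^+ d = diag_mx (\row_i (s 0 i ^+ d)).
Proof.
elim: d => [|d IHd]; apply/matrixP => i j.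
  by rewrite expr0 !mxE; case: (i == j).
rewrite exprS IHd -mulmxE mul_diag_mx !mxE.
by case: (i == j); rewrite ?mulr0n ?mulr0 // exprS.
Qed.

Lemma eigenvalue_diag_mx (F : fieldType) n (s : 'rV[F]_n) i :
  eigenvalue (diag_mx s) (s 0 i).
Proof.
apply/eigenvalueP; exists (delta_mx 0 i).
  apply/matrixP => a b; rewrite mul_mx_diag !mxE.
  by case: (b =P i) => [->|_]; rewrite ?andbT ?andbF ?mul0r ?mulr0 // mulrC.
by apply/eqP => /matrixP /(_ 0 i); rewrite !mxE !eqxx; exact/eqP/oner_neq0.
Qed.

Lemma unitmx_conjX (F : fieldType) n (P A : 'M[F]_n.+1) d : P \in unitmx ->
  (invmx P *m A *m P) ^+ d = invmx P *m A ^+ d *m P.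
Proof.
move=> P_unit; elim: d => [|d IHd]; first by rewrite !expr0 mulmx1 mulVmx.
rewrite !exprS IHd -!mulmxE !mulmxA; congr (_ *m _).
by rewrite -[_ *m P *m invmx P]mulmxA mulmxV // mulmx1.
Qed.

Section UnimodularDiagonalizable.
Variables (R : realType) (k : nat) (g : 'M[R[i]]_k.+1).
Hypotheses (g_diag : diagonalizable g)
  (g_eig : forall a : R[i], eigenvalue g a -> `|a| = 1).

Lemma unimodular_diagonalization : exists P (r : 'rV[R[i]]_k.+1),
  [/\ P \in unitmx, forall i, normc (r 0 i) = 1 & g = invmx P *m diag_mx r *m P].
Proof.
case: g_diag => P P_unit /diag_mxP[r gPr]; exists P, r; split => //; last first.
  by rewrite -gPr conjumx // !mulmxA mulVmx // mul1mx mulmxKV.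
move=> i; apply: complexI; apply: g_eig.
apply: (eigenvalue_conjmx (V := P)); rewrite ?stablemx_unit ?row_free_unit //.
by rewrite [conjmx _ _]gPr; exact: eigenvalue_diag_mx.
Qed.

Lemma unimodular_pow_near1 (eps : R) : 0 < eps ->
  exists2 d, (0 < d)%N & mxnorm (g ^+ d - 1) < eps.
Proof.
move=> eps_gt0; have [P [r [P_unit r1 gE]]] := unimodular_diagonalization.
pose M := mxnorm (invmx P) * mxnorm P * k.+1%:R.
have M_ge0 : 0 <= M by rewrite !mulr_ge0 ?mxnorm_ge0.
have del_gt0 : 0 < eps / (M + 1) by rewrite divr_gt0 // ltr_wpDl.
have [d d_gt0 rd_near1] := unimodular_simultaneous_return r1 del_gt0.
exists d => //.
have -> : g ^+ d - 1 = invmx P *m diag_mx (\row_i (r 0 i ^+ d - 1)) *m P.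
  have one_conj : 1 = invmx P *m 1%:M *m P by rewrite mulmx1 mulVmx.
  rewrite gE unitmx_conjX // [in LHS]one_conj -mulmxBl -mulmxBr.
  congr (_ *m _ *m _).
  by rewrite diag_mxX -diag_const_mx -raddfB; congr diag_mx; apply/matrixP => ? ?; rewrite !mxE.
apply: le_lt_trans (mxnormM _ _) _.
apply: (@le_lt_trans _ _ (M * (eps / (M + 1)))); last first.
  by rewrite mulrA ltr_pdivrMr ?ltr_wpDl //; nra.
rewrite /M -mulrA mulrAC; apply: ler_wpM2r; first exact: mxnorm_ge0.
apply: le_trans (mxnormM _ _) _; apply: ler_wpM2l; first exact: mxnorm_ge0.
rewrite mxnorm_diag.
under eq_bigr do rewrite mxE.
apply: le_trans (ler_sum _ (fun i _ => ltW (rd_near1 i))) _.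
by rewrite sumr_const card_ord mulr_natl.
Qed.

End UnimodularDiagonalizable.

Section ProjectiveEquivalence.
Variables (R : realType) (n : nat).
Implicit Types A B D : 'M[R[i]]_n.+1.

Lemma mx_peq_refl A : mx_peq A A.
Proof. by exists 1; rewrite oner_neq0 scale1r. Qed.

Lemma mx_peq_sym A B : mx_peq A B -> mx_peq B A.
Proof.
by case=> c [c_neq0 ->]; exists c^-1; rewrite invr_eq0 scalerA mulVf ?scale1r.
Qed.

Lemma mx_peq_trans A B D : mx_peq A B -> mx_peq B D -> mx_peq A D.
Proof.
case=> b [b_neq0 ->] [c [c_neq0 ->]].
by exists (c * b); rewrite mulf_neq0 ?scalerA.
Qed.

Lemma sub_pclosure (S : pvec R n -> Prop) y : y != 0 -> S y -> pclosure S y.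
Proof.
move=> y_neq0 Sy; exists (fun=> y); split=> //; split=> //; split=> //.
exists (fun=> 1); split=> [_|e e_gt0]; first exact: oner_neq0.
by exists 0%N => m _ i; rewrite scale1r subrr normr0.
Qed.

End ProjectiveEquivalence.

Lemma pcvg_near1 (R : realType) k (h : nat -> 'M[R[i]]_k.+1) (y : pvec R k) :
    y != 0 -> (forall m, h m \in unitmx) ->
    (forall m, mxnorm (h m - 1) < m.+1%:R^-1) ->
  pcvg (fun m => h m *m y) y.
Proof.
move=> y_neq0 h_unit h_near1; split=> //; split.
  by move=> m; apply: contraNneq y_neq0 => hy0; rewrite -(mulKmx (h_unit m) y) hy0 mulmx0.
exists (fun=> 1); split=> [_|e e_gt0]; first exact: oner_neq0.
have e_gt0' : 0 < complex.Re e by case: e e_gt0 => a b; rewrite ltcE => /andP[].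
pose N := Num.truncn (mxnorm y / complex.Re e).
have /andP[_] := truncn_itv (divr_ge0 (mxnorm_ge0 y) (ltW e_gt0')).
rewrite -/N ltr_pdivrMr // => y_lt_N.
exists N => m le_Nm i; rewrite scale1r; apply: normc_ltC => //.
have -> : (h m *m y) i 0 - y i 0 = ((h m - 1) *m y) i 0 by rewrite mulmxBl mul1mx !mxE.
apply: le_lt_trans (normc_le_mxnorm _ _ _) _; apply: le_lt_trans (mxnormM _ _) _.
apply: (@le_lt_trans _ _ (m.+1%:R^-1 * mxnorm y)).
  by apply: ler_wpM2r; [exact: mxnorm_ge0 | exact: ltW].
rewrite mulrC ltr_pdivrMr ?ltr0Sn //; apply: lt_le_trans y_lt_N _.
by rewrite mulrC ler_pM2l // ler_nat.
Qed.

Section InfiniteOrder.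
Variables (R : realType) (k : nat) (g : 'M[R[i]]_k.+1).
Hypotheses (g_unit : g \in unitmx) (g_inf : ~ psl_finite_order g).

Lemma pow_neq_scalar d c : (0 < d)%N -> g ^+ d != c%:M.
Proof. by move=> d_gt0; apply/eqP => gd; apply: g_inf; exists d; split=> //; exists c. Qed.

Lemma pw_distinct_pow (kk : nat -> nat) :
  {homo kk : i j / (i < j)%N} -> pw_distinct (fun m => g ^+ kk m).
Proof.
move=> kk_mono.
suff lt_distinct i j : (i < j)%N -> ~ mx_peq (g ^+ kk i) (g ^+ kk j).
  move=> i j /eqP; case: ltngtP => // [/lt_distinct //|gt_ij _ /mx_peq_sym].
  exact: lt_distinct.
move=> /kk_mono lt_kk [c [_ gkk]].
have /eqP[] := pow_neq_scalar c (etrans (subn_gt0 _ _) lt_kk).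
have gi_unit : g ^+ kk i \in unitmx by exact: unitrX.
apply: (mulrI gi_unit).
by rewrite -exprD (subnKC (ltnW lt_kk)) gkk -mul_mx_scalar.
Qed.

Hypotheses (g_diag : diagonalizable g)
  (g_eig : forall a : R[i], eigenvalue g a -> `|a| = 1).

Lemma unimodular_pow_near1_gt N (eps : R) : 0 < eps ->
  exists2 d, (N < d)%N & mxnorm (g ^+ d - 1) < eps.
Proof.
elim: N eps => [|N IHN] eps eps_gt0; first exact: unimodular_pow_near1.
have gN_gt0 : 0 < mxnorm (g ^+ N.+1 - 1).
  by rewrite mxnorm_gt0 // subr_eq0 (pow_neq_scalar 1 (ltn0Sn N)).
have [d lt_Nd near_min] := IHN (Num.min eps (mxnorm (g ^+ N.+1 - 1)))
  ltac:(by rewrite lt_min eps_gt0).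
move: near_min; rewrite lt_min => /andP[near_d closer_d]; exists d => //.
by rewrite ltn_neqAle lt_Nd andbT; apply: contraTneq closer_d => ->; rewrite ltxx.
Qed.

Lemma pow_seq_to1 : exists kk : nat -> nat,
  {homo kk : i j / (i < j)%N} /\ forall m, mxnorm (g ^+ kk m - 1) < m.+1%:R^-1.
Proof.
have next N m : exists d, (N < d)%N && (mxnorm (g ^+ d - 1) < m.+1%:R^-1).
  have [d lt_Nd near_d] := @unimodular_pow_near1_gt N m.+1%:R^-1 ltac:(by rewrite invr_gt0).
  by exists d; rewrite lt_Nd near_d.
pose fix kk m := xchoose (next (if m is m'.+1 then kk m' else 0%N) m).
have kkP m : ((if m is m'.+1 then kk m' else 0) < kk m)%N &&
    (mxnorm (g ^+ kk m - 1) < m.+1%:R^-1) by case: m => [|m]; exact: (xchooseP (next _ _)).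
exists kk; split=> [|m]; last by case/andP: (kkP m).
apply: (homo_ltn (r := fun a b => (a < b)%N)) => [? ? ?|m]; first exact: ltn_trans.
by case/andP: (kkP m.+1).
Qed.

Lemma infinite_order_Lambda y : y != 0 -> Lambda (cyclic_grp g) y.
Proof.
move=> y_neq0; have [kk [kk_mono kk_near1]] := pow_seq_to1.
apply: sub_pclosure => //; exists y; split=> //; exists (fun m => g ^+ kk m).
split; first by move=> m; exists (kk m)%:Z; exact: mx_peq_refl.
split; first exact: pw_distinct_pow.
by apply: pcvg_near1 => // m; exact: unitrX.
Qed.

End InfiniteOrder.

Section FiniteOrder.
Variables (R : realType) (k : nat) (g : 'M[R[i]]_k.+1).
Hypotheses (g_unit : g \in unitmx) (g_fin : psl_finite_order g).

Lemma cyclic_grp_finite :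
  exists K, forall h, cyclic_grp g h -> exists r : 'I_K, mx_peq (g ^+ r) h.
Proof.
case: g_fin => K [K_gt0 [c gK]]; exists K => h [z gz_h].
have c_unit : c \is a GRing.unit.
  rewrite unitfE; apply: contraTneq (unitrX K g_unit) => c0.
  by rewrite gK c0 unitmxE det_scalar expr0n /= unitr0.
have K_neq0 : K%:Z != 0 by rewrite eqz_nat -lt0n.
pose r := `|(z %% K)%Z|%N.
have zK_r : (z %% K)%Z = r by rewrite gez0_abs ?modz_ge0.
have r_lt_K : (r < K)%N by rewrite -ltz_nat -zK_r ltz_pmod.
exists (Ordinal r_lt_K); apply: mx_peq_trans gz_h.
exists (c ^ (z %/ K)%Z); rewrite expfz_neq0 ?unitf_neq0 //; split=> //.
rewrite {1}(divz_eq z K) exprzDr // zK_r mulrC -exprz_exp.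
have -> : g ^ K%:Z = c%:M by rewrite -gK.
by rewrite -(rmorphXz (scalar_mx : R[i] -> 'M_k.+1)) // -mulmxE mul_scalar_mx.
Qed.

Lemma finite_order_not_pw_distinct h :
  (forall m, cyclic_grp g (h m)) -> ~ pw_distinct h.
Proof.
move=> h_cyc h_pw; have [K hK] := cyclic_grp_finite.
have [f fP] : exists f : nat -> 'I_K, forall m, mx_peq (g ^+ f m) (h m).
  exists (fun m => proj1_sig (constructive_indefinite_description _ (hK _ (h_cyc m)))).
  by move=> m; case: constructive_indefinite_description.
have /injectivePn[i [j neq_ij fij]] : ~~ injectiveb (fun i : 'I_K.+1 => f i).
  by apply/injectiveP => /leq_card; rewrite !card_ord ltnn.
apply: (h_pw i j); first by move=> /val_inj eq_ij; rewrite eq_ij eqxx in neq_ij.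
by apply: mx_peq_trans (mx_peq_sym (fP i)) _; rewrite fij; exact: fP.
Qed.

End FiniteOrder.

Theorem mainTheorem10 (R : realType) (n : nat) (g : 'M[R[i]]_(n.+1)) :
  (0 < n)%N ->
  \det g = 1 ->
  diagonalizable g ->
  (forall a : R[i], eigenvalue g a -> `|a| = 1) ->
  (psl_finite_order g -> forall y : pvec R n, y != 0 -> ~ Lambda_Kul (cyclic_grp g) y) /\
  (~ psl_finite_order g -> forall y : pvec R n, y != 0 -> Lambda_Kul (cyclic_grp g) y).
Proof.
move=> _ det_g g_diag g_eig.
have g_unit : g \in unitmx by rewrite unitmxE det_g unitr1.
split=> [g_fin y _ | g_inf y y_neq0]; last by left; exact: infinite_order_Lambda.
have no_pw := finite_order_not_pw_distinct g_unit g_fin.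
case=> [[x [Sx _]] | [x [Sx _]]].
- have [_ [_ [h [h_cyc [h_pw _]]]]] := Sx 0%N; exact: no_pw h_cyc h_pw.
- have [_ [_ [_ [h [_ [h_cyc [h_pw _]]]]]]] := Sx 0%N; exact: no_pw h_cyc h_pw.
Qed.
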